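(* Let $M$ be a finite MDP with fairness setup and $p_{\mathrm{maj}},p_{\mathrm{min}}>0$. Let $R_{\max}>0$ satisfy $|R_{s,a}|\le R_{\max}$ and $|\rho_{s,a}|\le R_{\max}$ for all $s,a$. Let $\epsilon>0$, $\sigma\in(0,1/2]$, and let $T$ be a positive integer with $\dfrac{\gamma^TR_{\max}}{1-\gamma}\le\dfrac{\sigma^2\epsilon}{4}$. Let $\pi^*$ be a maximizer of $R^{(\pi)}$ over $\pi\in\Pi_{\mathrm{DP},(1-\sigma)^2\epsilon}$ and let $\tilde\pi^*$ be a maximizer of $\tilde R^{(\pi)}$ over $\pi\in\tilde\Pi_{\mathrm{DP},(1-\sigma)\epsilon}$ (both assumed to exist). Then $\tilde\pi^*\in\Pi_{\mathrm{DP},\epsilon}$ and $R^{(\pi^* )}-R^{(\tilde\pi^* )}\le\sigma^2\epsilon/2$.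
   Context: A finite MDP is $M=(S,A,D,P,R,\gamma)$ where $S,A$ are finite nonempty sets, $D$ is a probability distribution on $S$, $P_{s,a,s'}\ge 0$ with $\sum_{s'}P_{s,a,s'}=1$ for all $s,a$, $R\in\mathbb{R}^{S\times A}$, and $\gamma\in(0,1)$. A policy is $\pi\in\mathbb{R}^{S\times A}$ with $\pi_{s,a}\ge0$ and $\sum_a\pi_{s,a}=1$. Let $P^{(\pi)}_{s,s'}=\sum_a\pi_{s,a}P_{s,a,s'}$. For a distribution $\mu$ on $S$ set $\mu^{(\pi,0)}=\mu$, $\mu^{(\pi,t)}_{s'}=\sum_s\mu^{(\pi,t-1)}_sP^{(\pi)}_{s,s'}$, and $\mu^{(\pi)}=(1-\gamma)\sum_{t\ge0}\gamma^t\mu^{(\pi,t)}$. Write $D^{(\pi,t)},D^{(\pi)}$ for $\mu=D$, $\Lambda^{(\pi)}_{s,a}=D^{(\pi)}_s\pi_{s,a}$, and $R^{(\pi)}=(1-\gamma)^{-1}\sum_{s,a}\Lambda^{(\pi)}_{s,a}R_{s,a}$. Fairness setup: $S=Z\times\tilde S$ with $Z=\{\mathrm{maj},\mathrm{min}\}$ and $\tilde S$ finite nonempty; agent rewards $\rho\in\mathbb{R}^{S\times A}$. For $z\in Z$, $p_z=\sum_{\tilde s}D_{(z,\tilde s)}$, $D_z$ is the distribution $(D_z)_s=D_s\cdot\mathbb{I}[s=(z,\tilde s)\text{ for some }\tilde s]/p_z$, $D_z^{(\pi,t)},D_z^{(\pi)}$ are $\mu^{(\pi,t)},\mu^{(\pi)}$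 for $\mu=D_z$, $(\Lambda_z^{(\pi)})_{s,a}=(D_z^{(\pi)})_s\pi_{s,a}$, and $\rho_z^{(\pi)}=\sum_{s,a}(\Lambda_z^{(\pi)})_{s,a}\rho_{s,a}$. For $\eta\ge0$, $\Pi_{\mathrm{DP},\eta}$ is the set of policies with $|\rho_{\mathrm{maj}}^{(\pi)}-\rho_{\mathrm{min}}^{(\pi)}|\le\eta$. Truncated quantities: $\tilde R^{(\pi)}=\sum_{t=0}^{T-1}\gamma^t\sum_{s,a}D^{(\pi,t)}_s\pi_{s,a}R_{s,a}$, $\tilde\rho_z^{(\pi)}=(1-\gamma)\sum_{t=0}^{T-1}\gamma^t\sum_{s,a}(D_z^{(\pi,t)})_s\pi_{s,a}\rho_{s,a}$, and $\tilde\Pi_{\mathrm{DP},\eta}$ is the set of policies with $|\tilde\rho_{\mathrm{maj}}^{(\pi)}-\tilde\rho_{\mathrm{min}}^{(\pi)}|\le\eta$. *)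

From HB Require Import structures.
From Stdlib Require Import Reals ClassicalEpsilon.
From mathcomp Require Import all_boot.

Set Implicit Arguments.
Unset Strict Implicit.
Unset Printing Implicit Defensive.

Local Open Scope R_scope.

Lemma Rplus_assoc' : associative Rplus.
Proof. intros x y z; symmetry; apply Rplus_assoc. Qed.
Lemma Rplus_comm' : commutative Rplus.
Proof. intros x y; apply Rplus_comm. Qed.
Lemma Rplus_0_l' : left_id (IZR 0) Rplus.
Proof. intros x; apply Rplus_0_l. Qed.
HB.instance Definition _ := Monoid.isComLaw.Build R (IZR 0) Rplus
  Rplus_assoc' Rplus_comm' Rplus_0_l'.

Notation "\rsum_ ( i : T ) F" := (\big[Rplus/IZR 0]_(i : T) F)
  (at level 41, F at level 41, i, T at level 50) : R_scope.
Notation "\rsum_ ( i < n ) F" := (\big[Rplus/IZR 0]_(i < n) F)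
  (at level 41, F at level 41, i, n at level 50) : R_scope.

(* Value of a convergent real series sum_{t>=0} u t (the limit of the partial
   sums sum_f_R0 u N = u 0 + ... + u N), chosen by classical description;
   it is only applied to convergent series here. *)
Definition series (u : nat -> R) : R :=
  epsilon (inhabits 0) (fun l => Un_cv (fun N => sum_f_R0 u N) l).

Section MDP.
Variables (S A : finType).

Definition is_dist (mu : S -> R) : Prop :=
  (forall s, 0 <= mu s) /\ \rsum_(s : S) mu s = 1.

Definition is_transition (P : S -> A -> S -> R) : Prop :=
  (forall s a s', 0 <= P s a s') /\ (forall s a, \rsum_(s' : S) P s a s' = 1).

Definition is_policy (pi : S -> A -> R) : Prop :=
  (forall s a, 0 <= pi s a) /\ (forall s, \rsum_(a : A) pi s a = 1).

Definition Ppi (P : S -> A -> S -> R) (pi : S -> A -> R) (s s' : S) : R :=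
  \rsum_(a : A) pi s a * P s a s'.

Fixpoint mu_t (P : S -> A -> S -> R) (pi : S -> A -> R) (mu : S -> R) (t : nat)
  : S -> R :=
  match t with
  | O => mu
  | Datatypes.S t' => fun s' => \rsum_(s : S) mu_t P pi mu t' s * Ppi P pi s s'
  end.

Definition occ (gamma : R) (P : S -> A -> S -> R) (pi : S -> A -> R)
  (mu : S -> R) (s : S) : R :=
  (1 - gamma) * series (fun t => gamma ^ t * mu_t P pi mu t s).

Definition Lam (gamma : R) (P : S -> A -> S -> R) (D : S -> R)
  (pi : S -> A -> R) (s : S) (a : A) : R :=
  occ gamma P pi D s * pi s a.

Definition Rval (gamma : R) (P : S -> A -> S -> R) (D : S -> R)
  (Rw : S -> A -> R) (pi : S -> A -> R) : R :=
  / (1 - gamma) * \rsum_(s : S) \rsum_(a : A) Lam gamma P D pi s a * Rw s a.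

Definition Rtil (gamma : R) (T : nat) (P : S -> A -> S -> R) (D : S -> R)
  (Rw : S -> A -> R) (pi : S -> A -> R) : R :=
  \rsum_(t < T) gamma ^ t *
     \rsum_(s : S) \rsum_(a : A) mu_t P pi D t s * pi s a * Rw s a.
End MDP.

(* Fairness setup: S = Z x St with Z = {maj, min}; we encode maj = true,
   min = false. *)
Definition maj : bool := true.
Definition min : bool := false.

Section Fair.
Variables (St A : finType).
Local Notation S := (bool * St)%type.

Definition pz (D : S -> R) (z : bool) : R :=
  \rsum_(s : St) D (z, s).

Definition Dz (D : S -> R) (z : bool) (s : S) : R :=
  if s.1 == z then D s / pz D z else 0.

Definition rhoz (gamma : R) (P : S -> A -> S -> R) (D : S -> R)
  (rho : S -> A -> R) (pi : S -> A -> R) (z : bool) : R :=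
  \rsum_(s : S) \rsum_(a : A) occ gamma P pi (Dz D z) s * pi s a * rho s a.

Definition rhoz_til (gamma : R) (T : nat) (P : S -> A -> S -> R) (D : S -> R)
  (rho : S -> A -> R) (pi : S -> A -> R) (z : bool) : R :=
  (1 - gamma) * \rsum_(t < T) gamma ^ t *
     \rsum_(s : S) \rsum_(a : A) mu_t P pi (Dz D z) t s * pi s a * rho s a.

Definition in_PiDP gamma P D rho (eta : R) (pi : S -> A -> R) : Prop :=
  is_policy pi /\
  Rabs (rhoz gamma P D rho pi maj - rhoz gamma P D rho pi min) <= eta.

Definition in_PiDP_til gamma T P D rho (eta : R) (pi : S -> A -> R) : Prop :=
  is_policy pi /\
  Rabs (rhoz_til gamma T P D rho pi maj - rhoz_til gamma T P D rho pi min) <= eta.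
End Fair.

From Stdlib Require Import Reals Lra ClassicalEpsilon.
From mathcomp Require Import all_boot.
Local Open Scope R_scope.

Set Implicit Arguments.
Unset Strict Implicit.

(* Under any policy the state distribution mu^(pi,t) stays a probability
   distribution, so the expected reward at stage t is bounded by R_max in
   absolute value.  Hence the discounted tail beyond T of every objective
   (R^(pi), rho_z^(pi)) is at most gamma^T R_max/(1-gamma) <= sigma^2 eps/4, so
   truncation moves each quantity by at most sigma^2 eps/4.  This shifts the
   fairness constraints by at most sigma^2 eps/2: pi* is feasible for the
   truncated problem with slack (1-sigma) eps, pi~ is feasible for the exact
   problem with slack eps, and comparing values of pi* and pi~ through the
   truncated objective costs at most twice the truncation error. *)

Section RealSums.
Variable I : Type.
Implicit Types (r : seq I) (P : pred I) (F G : I -> R).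

Lemma Rmult_sumr c r F :
  c * \big[Rplus/0]_(i <- r) F i = \big[Rplus/0]_(i <- r) (c * F i).
Proof. by apply: big_endo => [x y|]; ring. Qed.

Lemma Rmult_suml c r F :
  (\big[Rplus/0]_(i <- r) F i) * c = \big[Rplus/0]_(i <- r) (F i * c).
Proof. by apply: (big_endo (fun x => x * c)) => [x y|]; ring. Qed.

Lemma ler_Rsum r F G : (forall i, F i <= G i) ->
  \big[Rplus/0]_(i <- r) F i <= \big[Rplus/0]_(i <- r) G i.
Proof. by move=> FG; apply: big_ind2 => // *; [lra | apply: Rplus_le_compat]. Qed.

Lemma Rsum_ge0 r P F : (forall i, P i -> 0 <= F i) ->
  0 <= \big[Rplus/0]_(i <- r | P i) F i.
Proof. by move=> F0; apply: big_ind => // *; [lra | apply: Rplus_le_le_0_compat]. Qed.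

Lemma Rabs_Rsum r F :
  Rabs (\big[Rplus/0]_(i <- r) F i) <= \big[Rplus/0]_(i <- r) Rabs (F i).
Proof.
apply: (big_ind2 (fun x y => Rabs x <= y)) => [|x1 x2 y1 y2 ? ?|i _].
- rewrite Rabs_R0; lra.
- apply: Rle_trans (Rabs_triang x1 y1) _; lra.
- lra.
Qed.

Lemma Rsum_cv r (u : I -> nat -> R) (l : I -> R) :
  (forall i, Un_cv (u i) (l i)) ->
  Un_cv (fun N => \big[Rplus/0]_(i <- r) u i N) (\big[Rplus/0]_(i <- r) l i).
Proof.
move=> ul; elim: r => [|i r IH].
- rewrite big_nil => e e_gt0; exists 0%N => n _.
  by rewrite big_nil /R_dist Rminus_0_r Rabs_R0.
- rewrite big_cons; apply: Un_cv_ext (CV_plus _ _ _ _ (ul i) IH) => N.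
  by rewrite big_cons.
Qed.
End RealSums.

Lemma Un_cv_const c : Un_cv (fun _ => c) c.
Proof. by move=> e e_gt0; exists 0%N => n _; rewrite /R_dist Rminus_diag Rabs_R0. Qed.

Lemma Rsum_ge_term (I : finType) (F : I -> R) j :
  (forall i, 0 <= F i) -> F j <= \rsum_(i : I) F i.
Proof.
move=> F0; rewrite (bigD1 j) //=.
have := Rsum_ge0 (index_enum I) (fun i (_ : i != j) => F0 i); lra.
Qed.

Lemma sum_f_R0_big u N : sum_f_R0 u N = \rsum_(t < N.+1) u t.
Proof.
elim: N => [|N IH]; first by rewrite big_ord_recr big_ord0 /=; ring.
by rewrite big_ord_recr /= IH.
Qed.

Section DiscountedSeries.
Variables (gamma C : R) (g : nat -> R).
Hypothesis gamma01 : 0 < gamma < 1.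
Hypothesis g_bounded : forall t, Rabs (g t) <= C.

Lemma discounted_block_le T N :
  (1 - gamma) * Rabs (\rsum_(t < T + N) (gamma ^ t * g t)
                      - \rsum_(t < T) (gamma ^ t * g t))
  <= C * (gamma ^ T - gamma ^ (T + N)).
Proof.
elim: N => [|N IH]; first by rewrite addn0 !Rminus_diag Rabs_R0; lra.
rewrite addnS big_ord_recr /=.
set d := \rsum_(t < T + N) _ - _ in IH; set x := gamma ^ (T + N) in IH *.
have x_ge0 : 0 <= x by apply: pow_le; lra.
have step : Rabs (d + x * g (T + N)%N) <= Rabs d + x * C.
  apply: Rle_trans (Rabs_triang _ _) _.
  rewrite Rabs_mult (Rabs_pos_eq x) //; have := g_bounded (T + N); nra.
have -> : \rsum_(i < T + N) (gamma ^ i * g i) + x * g (T + N)%N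
          - \rsum_(t < T) (gamma ^ t * g t) = d + x * g (T + N)%N.
  by rewrite /d; ring.
have : (1 - gamma) * Rabs (d + x * g (T + N)%N) <= (1 - gamma) * (Rabs d + x * C)
  by apply: Rmult_le_compat_l; lra.
nra.
Qed.

Lemma discounted_tail_le T l :
  Un_cv (fun N => sum_f_R0 (fun t => gamma ^ t * g t) N) l ->
  Rabs (l - \rsum_(t < T) (gamma ^ t * g t)) <= gamma ^ T * C / (1 - gamma).
Proof.
move=> cvl; apply: Rnot_lt_le => lt_bound.
have [N HN] := cvl _ (proj2 (Rlt_0_minus _ _) lt_bound).
have {HN} := HN (N + T)%N (leP (leq_addr _ _)); rewrite /R_dist.
have C_ge0 : 0 <= C by have := g_bounded 0; have := Rabs_pos (g 0%N); lra.
have pow_ge0 k : 0 <= gamma ^ k by apply: pow_le; lra.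
have := discounted_block_le T ((N + T).+1 - T)%N.
rewrite sum_f_R0_big subnKC; last by rewrite leqW // leq_addl.
set s := \rsum_(t < _) _; set sT := \rsum_(t < T) _ => block.
have : Rabs (s - sT) <= gamma ^ T * C / (1 - gamma).
  apply: (Rmult_le_reg_l (1 - gamma)); first lra.
  have -> : (1 - gamma) * (gamma ^ T * C / (1 - gamma)) = gamma ^ T * C
    by field; lra.
  have := pow_ge0 (N + T).+1; nra.
have := Rabs_triang (l - s) (s - sT).
have -> : l - s + (s - sT) = l - sT by ring.
rewrite [Rabs (l - s)]Rabs_minus_sym; lra.
Qed.
End DiscountedSeries.

Lemma geometric_dominated_cv gamma u : 0 < gamma < 1 ->
  (forall t, 0 <= u t <= gamma ^ t) ->
  Un_cv (fun N => sum_f_R0 u N) (series u).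
Proof.
move=> gamma01 u_dom; apply: (epsilon_spec (inhabits 0)).
have [l ?] : {l | Un_cv (fun N => sum_f_R0 u N) l}; last by exists l.
apply: growing_cv => [n|]; first by have := u_dom n.+1; rewrite /=; lra.
exists (/ (1 - gamma)) => _ [n ->].
apply: Rle_trans (sum_Rle u (fun t => gamma ^ t) n (fun t _ => proj2 (u_dom t))) _.
rewrite tech3; last lra.
have : 0 <= gamma ^ n.+1 by apply: pow_le; lra.
have : 0 < / (1 - gamma) by apply: Rinv_0_lt_compat; lra.
rewrite /Rdiv; nra.
Qed.

Section MarkovChain.
Variables (S A : finType) (P : S -> A -> S -> R) (pi : S -> A -> R).
Hypothesis P_trans : is_transition P.
Hypothesis pi_policy : is_policy pi.

Lemma Ppi_ge0 s s' : 0 <= Ppi P pi s s'.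
Proof.
apply: Rsum_ge0 => a _.
by apply: Rmult_le_pos; [apply: (proj1 pi_policy) | apply: (proj1 P_trans)].
Qed.

Lemma Ppi_sum1 s : \rsum_(s' : S) Ppi P pi s s' = 1.
Proof.
rewrite /Ppi exchange_big /= -(proj2 pi_policy s); apply: eq_bigr => a _.
by rewrite -Rmult_sumr (proj2 P_trans s a) Rmult_1_r.
Qed.

Lemma mu_t_dist mu t : is_dist mu -> is_dist (mu_t P pi mu t).
Proof.
move=> mu_dist; elim: t => [|t [IH0 IH1]] //=; split.
- by move=> s'; apply: Rsum_ge0 => s _; apply: Rmult_le_pos; [|apply: Ppi_ge0].
- rewrite exchange_big /= -IH1; apply: eq_bigr => s _.
  by rewrite -Rmult_sumr Ppi_sum1 Rmult_1_r.
Qed.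

Definition stage_reward (mu : S -> R) (f : S -> A -> R) (t : nat) : R :=
  \rsum_(s : S) \rsum_(a : A) mu_t P pi mu t s * pi s a * f s a.

Lemma Rabs_stage_reward mu f C t : is_dist mu ->
  (forall s a, Rabs (f s a) <= C) -> Rabs (stage_reward mu f t) <= C.
Proof.
move=> mu_dist f_bounded; have [m_ge0 m_sum1] := mu_t_dist t mu_dist.
set m := mu_t P pi mu t in m_ge0 m_sum1 *.
have total_mass : \rsum_(s : S) \rsum_(a : A) m s * pi s a * C = C.
  rewrite -[RHS]Rmult_1_l -m_sum1 Rmult_suml; apply: eq_bigr => s _.
  rewrite -[m s * C]Rmult_1_r -(proj2 pi_policy s) Rmult_sumr.
  by apply: eq_bigr => a _; ring.
rewrite /stage_reward -/m -[X in _ <= X]total_mass.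
apply: Rle_trans (Rabs_Rsum _ _) _; apply: ler_Rsum => s.
apply: Rle_trans (Rabs_Rsum _ _) _; apply: ler_Rsum => a.
have pi_ge0 := proj1 pi_policy s a.
rewrite !Rabs_mult (Rabs_pos_eq _ (m_ge0 s)) (Rabs_pos_eq _ pi_ge0).
by apply: Rmult_le_compat_l; [apply: Rmult_le_pos | apply: f_bounded].
Qed.

Variable gamma : R.
Hypothesis gamma01 : 0 < gamma < 1.

(* Fubini for the discounted series: summing the stage rewards over t is
   the same as weighting the reward by the discounted state visits. *)
Lemma discounted_stage_reward_cv mu f : is_dist mu ->
  Un_cv (fun N => sum_f_R0 (fun t => gamma ^ t * stage_reward mu f t) N)
        (\rsum_(s : S) \rsum_(a : A)
            series (fun t => gamma ^ t * mu_t P pi mu t s) * pi s a * f s a).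
Proof.
move=> mu_dist.
pose visits s t := gamma ^ t * mu_t P pi mu t s.
pose r s := \rsum_(a : A) pi s a * f s a.
have visits_cv s : Un_cv (fun N => sum_f_R0 (visits s) N) (series (visits s)).
  apply: (geometric_dominated_cv gamma01) => t.
  have [m_ge0 m_sum1] := mu_t_dist t mu_dist.
  have := Rsum_ge_term s m_ge0; rewrite m_sum1 => m_le1.
  have : 0 <= gamma ^ t by apply: pow_le; lra.
  by have := m_ge0 s; rewrite /visits; split; nra.
have stage_split t :
    gamma ^ t * stage_reward mu f t = \rsum_(s : S) r s * visits s t.
  rewrite /stage_reward Rmult_sumr; apply: eq_bigr => s _.
  by rewrite /r Rmult_sumr Rmult_suml; apply: eq_bigr => a _; rewrite /visits; ring.
have -> : \rsum_(s : S) \rsum_(a : A) series (visits s) * pi s a * f s a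
          = \rsum_(s : S) r s * series (visits s).
  by apply: eq_bigr => s _; rewrite /r Rmult_suml; apply: eq_bigr => a _; ring.
apply: Un_cv_ext (Rsum_cv _
  (fun s => CV_mult _ _ _ _ (Un_cv_const (r s)) (visits_cv s))) => N.
elim: N => [|N IH]; first by have /= -> := stage_split 0%N.
rewrite tech5 -IH stage_split -big_split; apply: eq_bigr => s _ /=; ring.
Qed.

Lemma occ_truncation_error mu f C T : is_dist mu ->
  (forall s a, Rabs (f s a) <= C) ->
  Rabs (\rsum_(s : S) \rsum_(a : A) occ gamma P pi mu s * pi s a * f s a
        - (1 - gamma) * \rsum_(t < T) (gamma ^ t * stage_reward mu f t))
  <= gamma ^ T * C.
Proof.
move=> mu_dist f_bounded.
have := discounted_tail_le gamma01
  (fun t => Rabs_stage_reward t mu_dist f_bounded) T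
  (discounted_stage_reward_cv f mu_dist).
set L := \rsum_(s : S) _; set sT := \rsum_(t < T) _ => tail.
have -> : \rsum_(s : S) \rsum_(a : A) occ gamma P pi mu s * pi s a * f s a
          = (1 - gamma) * L.
  rewrite Rmult_sumr; apply: eq_bigr => s _.
  by rewrite Rmult_sumr; apply: eq_bigr => a _; rewrite /occ; ring.
rewrite -Rmult_minus_distr_l Rabs_mult Rabs_pos_eq; last lra.
have -> : gamma ^ T * C = (1 - gamma) * (gamma ^ T * C / (1 - gamma)) by field; lra.
by apply: Rmult_le_compat_l; first lra.
Qed.
End MarkovChain.

Lemma Dz_dist (St : finType) (D : bool * St -> R) z :
  is_dist D -> 0 < pz D z -> is_dist (Dz D z).
Proof.
move=> [D_ge0 _] pz_gt0; split.
  move=> s; rewrite /Dz; case: (s.1 == z); last lra.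
  by apply: Rmult_le_pos; [|apply: Rlt_le; apply: Rinv_0_lt_compat].
rewrite (eq_bigr (fun s => Dz D z (s.1, s.2))); last by case.
rewrite -(pair_big xpredT xpredT (fun b s => Dz D z (b, s))) /= big_bool /=.
have slice b : \rsum_(s : St) Dz D z (b, s) = if b == z then 1 else 0.
  rewrite /Dz /=; case: eqP => [->|_]; last by rewrite big1.
  rewrite -Rmult_suml; rewrite /pz in pz_gt0 *; field; lra.
by rewrite !slice; case: z {pz_gt0 slice} => /=; ring.
Qed.

Section Truncation.
Variables (St A : finType) (gamma : R) (T : nat) (D : bool * St -> R)
  (P : bool * St -> A -> bool * St -> R) (pi : bool * St -> A -> R).
Hypothesis gamma01 : 0 < gamma < 1.
Hypothesis D_dist : is_dist D.
Hypothesis P_trans : is_transition P.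
Hypothesis pi_policy : is_policy pi.

Lemma Rval_truncation_error (Rw : bool * St -> A -> R) C :
  (forall s a, Rabs (Rw s a) <= C) ->
  Rabs (Rval gamma P D Rw pi - Rtil gamma T P D Rw pi)
  <= gamma ^ T * C / (1 - gamma).
Proof.
move=> Rw_bounded.
have := occ_truncation_error P_trans pi_policy gamma01 T D_dist Rw_bounded.
rewrite /Rval /Lam -/(stage_reward P pi D Rw _).
set L := \rsum_(s : _) _; set sT := \rsum_(t < T) _ => err.
have -> : / (1 - gamma) * L - sT = / (1 - gamma) * (L - (1 - gamma) * sT)
  by field; lra.
rewrite Rabs_mult Rabs_pos_eq; last by apply: Rlt_le; apply: Rinv_0_lt_compat; lra.
rewrite Rmult_comm /Rdiv; apply: Rmult_le_compat_r => //.
by apply: Rlt_le; apply: Rinv_0_lt_compat; lra.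
Qed.

Lemma rhoz_truncation_error (rho : bool * St -> A -> R) C z :
  0 < pz D z -> (forall s a, Rabs (rho s a) <= C) ->
  Rabs (rhoz gamma P D rho pi z - rhoz_til gamma T P D rho pi z) <= gamma ^ T * C.
Proof.
move=> pz_gt0 rho_bounded.
exact (occ_truncation_error P_trans pi_policy gamma01 T (Dz_dist D_dist pz_gt0)
  rho_bounded).
Qed.

Lemma fairness_gap_truncation_error (rho : bool * St -> A -> R) C :
  0 < pz D maj -> 0 < pz D min -> (forall s a, Rabs (rho s a) <= C) ->
  Rabs ((rhoz gamma P D rho pi maj - rhoz gamma P D rho pi min)
        - (rhoz_til gamma T P D rho pi maj - rhoz_til gamma T P D rho pi min))
  <= 2 * (gamma ^ T * C).
Proof.
move=> pmaj pmin rho_bounded.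
move: (rhoz_truncation_error pmaj rho_bounded) (rhoz_truncation_error pmin rho_bounded).
by split_Rabs; lra.
Qed.
End Truncation.

Theorem theorem5 (St A : finType) (gamma : R) (D : bool * St -> R)
  (P : bool * St -> A -> bool * St -> R) (Rw rho : bool * St -> A -> R)
  (Rmax eps sigma : R) (T : nat) (pistar pitil : bool * St -> A -> R) :
  0 < gamma < 1 ->
  is_dist D -> is_transition P ->
  0 < pz D maj -> 0 < pz D min ->
  0 < Rmax ->
  (forall s a, Rabs (Rw s a) <= Rmax) ->
  (forall s a, Rabs (rho s a) <= Rmax) ->
  0 < eps -> 0 < sigma <= / 2 ->
  (0 < T)%nat ->
  gamma ^ T * Rmax / (1 - gamma) <= sigma ^ 2 * eps / 4 ->
  in_PiDP gamma P D rho ((1 - sigma) ^ 2 * eps) pistar ->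
  (forall pi, in_PiDP gamma P D rho ((1 - sigma) ^ 2 * eps) pi ->
     Rval gamma P D Rw pi <= Rval gamma P D Rw pistar) ->
  in_PiDP_til gamma T P D rho ((1 - sigma) * eps) pitil ->
  (forall pi, in_PiDP_til gamma T P D rho ((1 - sigma) * eps) pi ->
     Rtil gamma T P D Rw pi <= Rtil gamma T P D Rw pitil) ->
  in_PiDP gamma P D rho eps pitil /\
  Rval gamma P D Rw pistar - Rval gamma P D Rw pitil <= sigma ^ 2 * eps / 2.
Proof.
move=> gamma01 D_dist P_trans pmaj pmin Rmax_gt0 Rw_bounded rho_bounded eps_gt0
  sigma_bounds _ tail_small [pistar_policy gap_star] _ [pitil_policy gap_til] pitil_opt.
have rho_err_small : gamma ^ T * Rmax <= sigma ^ 2 * eps / 4.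
  apply: Rle_trans tail_small; rewrite /Rdiv -[X in X <= _]Rmult_1_r.
  apply: Rmult_le_compat_l; first by apply: Rmult_le_pos; [apply: pow_le|]; lra.
  by rewrite -Rinv_1; apply: Rinv_le_contravar; lra.
have gap_err pi : is_policy pi -> Rabs
    ((rhoz gamma P D rho pi maj - rhoz gamma P D rho pi min)
     - (rhoz_til gamma T P D rho pi maj - rhoz_til gamma T P D rho pi min))
    <= sigma ^ 2 * eps / 2.
  move=> pi_policy; apply: Rle_trans (fairness_gap_truncation_error T gamma01
    D_dist P_trans pi_policy pmaj pmin rho_bounded) _; lra.
have Rval_err pi : is_policy pi ->
    Rabs (Rval gamma P D Rw pi - Rtil gamma T P D Rw pi) <= sigma ^ 2 * eps / 4.
  move=> pi_policy; exact: Rle_trans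
    (Rval_truncation_error T gamma01 D_dist P_trans pi_policy Rw_bounded) tail_small.
have sigma_eps_gt0 : 0 < sigma * eps by nra.
have star_slack : (1 - sigma) ^ 2 * eps + sigma ^ 2 * eps / 2 <= (1 - sigma) * eps
  by nra.
have til_slack : (1 - sigma) * eps + sigma ^ 2 * eps / 2 <= eps by nra.
have star_feasible : in_PiDP_til gamma T P D rho ((1 - sigma) * eps) pistar.
  split=> //; move: gap_star (gap_err _ pistar_policy); split_Rabs; lra.
split.
  split=> //; move: gap_til (gap_err _ pitil_policy); split_Rabs; lra.
move: (pitil_opt _ star_feasible) (Rval_err _ pistar_policy) (Rval_err _ pitil_policy).
by split_Rabs; lra.
Qed.
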